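(* For every 3-periodic of the elliptic billiard, the product of the cosines of the three interior angles $\theta_1',\theta_2',\theta_3'$ of its outer triangle satisfies $$\prod_{i=1}^3\cos\theta_i'=\frac{JL}{4}-1,$$ where $J$ and $L$ are the (family-invariant) Joachimsthal constant and perimeter; in particular this product is the same for all 3-periodics.
   Context: The elliptic billiard is $\mathcal{E}: x^2/a^2+y^2/b^2=1$, $a>b>0$, $c=\sqrt{a^2-b^2}$. A 3-periodic is a triangle $P_1P_2P_3$ inscribed in $\mathcal{E}$ that is a closed billiard trajectory (at each vertex the normal to $\mathcal{E}$ bisects the angle between the two incident sides); all 3-periodics are tangent to a common confocal elliptic caustic. The outer triangle has as sides the tangent lines to $\mathcal{E}$ at $P_1,P_2,P_3$. The perimeter $L$ is the same for all 3-periodics. Joachimsthal's constant is $J=\frac12\nabla f(P_i)\cdot\hat v$, where $f(x,y)=x^2/a^2+y^2/b^2$, $\nabla f=2(x/a^2,y/b^2)$, and $\hat v$ is the unit direction of the trajectory at $P_i$ (outgoing, oriented so that $J>0$); it is the same at every vertex and for every 3-periodic. Explicitly, with $\delta=\sqrt{a^4-a^2b^2+b^4}$: $J=\sqrt{2\delta-a^2-b^2}/c^2$ and $L=2(\delta+a^2+b^2)J$. Moreover $\sum_{i=1}^3\cos\theta_i=JL-3$ for the interior angles $\theta_i$ of the 3-periodic. *)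

From Stdlib Require Import Reals.
Open Scope R_scope.

Definition pt : Type := (R * R)%type.

Definition vsub (P Q : pt) : pt := (fst P - fst Q, snd P - snd Q).
Definition vadd (P Q : pt) : pt := (fst P + fst Q, snd P + snd Q).
Definition dot (u v : pt) : R := fst u * fst v + snd u * snd v.
Definition cross (u v : pt) : R := fst u * snd v - snd u * fst v.
Definition vnorm (u : pt) : R := sqrt (dot u u).
Definition unitv (u : pt) : pt := (fst u / vnorm u, snd u / vnorm u).

Definition fE (a b : R) (P : pt) : R := fst P ^ 2 / a ^ 2 + snd P ^ 2 / b ^ 2.
Definition on_ellipse (a b : R) (P : pt) : Prop := fE a b P = 1.
Definition gradf (a b : R) (P : pt) : pt := (2 * fst P / a ^ 2, 2 * snd P / b ^ 2).

(* At vertex P (with neighbours Pprev, Pnext), the normal to the ellipse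
   (direction gradf P) bisects the angle between the two incident sides:
   the bisector direction (sum of the two unit side vectors) is parallel
   to the normal. *)
Definition normal_bisects (a b : R) (Pprev P Pnext : pt) : Prop :=
  cross (vadd (unitv (vsub Pprev P)) (unitv (vsub Pnext P))) (gradf a b P) = 0.

Definition is_3periodic (a b : R) (P1 P2 P3 : pt) : Prop :=
  on_ellipse a b P1 /\ on_ellipse a b P2 /\ on_ellipse a b P3 /\
  P1 <> P2 /\ P2 <> P3 /\ P3 <> P1 /\
  normal_bisects a b P3 P1 P2 /\
  normal_bisects a b P1 P2 P3 /\
  normal_bisects a b P2 P3 P1.

Definition on_tangent (a b : R) (P Q : pt) : Prop :=
  dot (vsub Q P) (gradf a b P) = 0.

Definition angle_at (A B C : pt) : R :=
  acos (dot (vsub B A) (vsub C A) / (vnorm (vsub B A) * vnorm (vsub C A))).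

(* family invariants (closed forms) *)
Definition deltaE (a b : R) : R := sqrt (a ^ 4 - a ^ 2 * b ^ 2 + b ^ 4).
Definition cE (a b : R) : R := sqrt (a ^ 2 - b ^ 2).
Definition Jconst (a b : R) : R :=
  sqrt (2 * deltaE a b - a ^ 2 - b ^ 2) / cE a b ^ 2.
Definition Lconst (a b : R) : R :=
  2 * (deltaE a b + a ^ 2 + b ^ 2) * Jconst a b.

From Stdlib Require Import Reals Lra Psatz.
Open Scope R_scope.

(* Each vertex of the billiard triangle is written P_i = (a X_i, b Y_i) with
   s_i = (X_i, Y_i) on the unit circle.  For two circle points s, t set
   hc s t = s.t - 1 and Dc s t = (a^2+b^2) - (a^2-b^2)(X X' - Y Y'): the squared
   chord |P_t - P_s|^2 equals -hc.Dc and the normal at P_s meets that chord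
   with inner product 2 hc.
   1. Squaring the reflection law at two vertices shows that the ratio hc/Dc
      is the same on all three sides, say -u with u > 0: the symmetric form
      gu = u Dc + hc vanishes on every side.
   2. On the vectors (X_i, Y_i, 1), hc is the form diag(1,1,-1) and gu a
      diagonal form, so their Gram matrices are hollow and diagonal.
      Cauchy-Binet and the mixed adjugate trace give non-collinearity, the
      caustic equation (a^2-b^2)^2 u^2 + 2(a^2+b^2) u - 3 = 0, and a product
      identity for nE s t = b^2 X X' + a^2 Y Y', the inner product of normals.
   3. The sides of the outer triangle are orthogonal to the normals at the P_i,
      and a triangle with sides orthogonal to n1, n2, n3 has cosine product
      -(n1.n2)(n2.n3)(n3.n1) / (|n1|^2 |n2|^2 |n3|^2).
   4. The caustic equation shows u = J^2 and J L = (a^2+b^2) u + 3, which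
      turns the product identity into J L / 4 - 1. *)


Lemma dot_vsub_pos (P Q : pt) : P <> Q -> 0 < dot (vsub P Q) (vsub P Q).
Proof.
  destruct P as [px py], Q as [qx qy]; unfold dot, vsub; cbn [fst snd]; intro Hne.
  destruct (Rlt_or_le 0 ((px - qx) * (px - qx) + (py - qy) * (py - qy))) as [Hpos | Hle];
    [exact Hpos |].
  exfalso; apply Hne.
  destruct (Rplus_sqr_eq_0 (px - qx) (py - qy)) as [Hx Hy].
  { apply Rle_antisym; [exact Hle | apply Rplus_le_le_0_compat; apply Rle_0_sqr]. }
  f_equal; lra.
Qed.

Lemma dot_sq_le (u v : pt) : dot u v ^ 2 <= dot u u * dot v v.
Proof.
  destruct u as [ux uy], v as [vx vy]; unfold dot; cbn [fst snd].
  assert (0 <= (ux * vy - uy * vx) ^ 2) by apply pow2_ge_0.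
  nra.
Qed.

Lemma cross_sq (u v : pt) : cross u v ^ 2 = dot u u * dot v v - dot u v ^ 2.
Proof. destruct u, v; unfold cross, dot; cbn [fst snd]; ring. Qed.

Lemma vnorm_sq (u : pt) : vnorm u * vnorm u = dot u u.
Proof. apply sqrt_sqrt; destruct u; unfold dot; cbn [fst snd]; nra. Qed.

Lemma vnorm_vsub_comm (P Q : pt) : vnorm (vsub P Q) = vnorm (vsub Q P).
Proof. unfold vnorm, dot, vsub; cbn [fst snd]; f_equal; ring. Qed.

(* The interior angle is recovered from the dot product of its sides
   (Cauchy-Schwarz keeps the argument of acos in [-1, 1]). *)
Lemma cos_angle_at (A B C : pt) : A <> B -> A <> C ->
  cos (angle_at A B C)
  = dot (vsub B A) (vsub C A) / (vnorm (vsub B A) * vnorm (vsub C A)).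
Proof.
  intros HAB HAC; unfold angle_at; apply cos_acos.
  set (u := vsub B A); set (v := vsub C A).
  assert (Nu : 0 < vnorm u) by (apply sqrt_lt_R0, dot_vsub_pos; congruence).
  assert (Nv : 0 < vnorm v) by (apply sqrt_lt_R0, dot_vsub_pos; congruence).
  set (N := vnorm u * vnorm v).
  assert (HN : 0 < N) by (apply Rmult_lt_0_compat; assumption).
  assert (CS : dot u v ^ 2 <= N * N).
  { replace (N * N) with (dot u u * dot v v) by (rewrite <- vnorm_sq, <- (vnorm_sq v); unfold N; ring).
    apply dot_sq_le. }
  assert (Hbound : - N <= dot u v <= N) by (split; nra).
  assert (Hx : dot u v = dot u v / N * N) by (field; lra).
  set (t := dot u v / N) in *.
  split; nra.
Qed.

(* Product of the cosines of a triangle in terms of its side vectors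
   Q3 - Q2, Q1 - Q3, Q2 - Q1 (each cosine carries one sign change). *)
Lemma cos_product_triangle (Q1 Q2 Q3 : pt) :
  Q1 <> Q2 -> Q2 <> Q3 -> Q3 <> Q1 ->
  cos (angle_at Q1 Q2 Q3) * cos (angle_at Q2 Q3 Q1) * cos (angle_at Q3 Q1 Q2)
  = - (dot (vsub Q3 Q2) (vsub Q1 Q3) * dot (vsub Q1 Q3) (vsub Q2 Q1)
       * dot (vsub Q2 Q1) (vsub Q3 Q2))
    / (dot (vsub Q3 Q2) (vsub Q3 Q2) * dot (vsub Q1 Q3) (vsub Q1 Q3)
       * dot (vsub Q2 Q1) (vsub Q2 Q1)).
Proof.
  intros H12 H23 H31.
  rewrite !cos_angle_at by congruence.
  rewrite (vnorm_vsub_comm Q3 Q1), (vnorm_vsub_comm Q1 Q2), (vnorm_vsub_comm Q2 Q3).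
  rewrite <- (vnorm_sq (vsub Q3 Q2)), <- (vnorm_sq (vsub Q1 Q3)),
    <- (vnorm_sq (vsub Q2 Q1)).
  replace (- (dot (vsub Q3 Q2) (vsub Q1 Q3) * dot (vsub Q1 Q3) (vsub Q2 Q1)
              * dot (vsub Q2 Q1) (vsub Q3 Q2)))
    with (dot (vsub Q2 Q1) (vsub Q3 Q1) * dot (vsub Q3 Q2) (vsub Q1 Q2)
          * dot (vsub Q1 Q3) (vsub Q2 Q3))
    by (unfold dot, vsub; cbn [fst snd]; ring).
  assert (N1 : 0 < vnorm (vsub Q3 Q2)) by (apply sqrt_lt_R0, dot_vsub_pos; congruence).
  assert (N2 : 0 < vnorm (vsub Q1 Q3)) by (apply sqrt_lt_R0, dot_vsub_pos; congruence).
  assert (N3 : 0 < vnorm (vsub Q2 Q1)) by (apply sqrt_lt_R0, dot_vsub_pos; congruence).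
  field; repeat split; lra.
Qed.

Lemma orthogonal_is_rotation (v n : pt) : 0 < dot n n -> dot v n = 0 ->
  exists r, v = (- r * snd n, r * fst n).
Proof.
  destruct v as [vx vy], n as [nx ny]; unfold dot; cbn [fst snd]; intros Hn Ho.
  exists ((nx * vy - ny * vx) / (nx * nx + ny * ny)).
  f_equal; apply (Rmult_eq_reg_r (nx * nx + ny * ny)); try lra; field_simplify; try lra.
  - replace (vx * nx ^ 2 + vx * ny ^ 2) with (nx * (vx * nx + vy * ny) - (nx * vy - ny * vx) * ny) by ring.
    rewrite Ho; ring.
  - replace (vy * nx ^ 2 + vy * ny ^ 2) with (ny * (vx * nx + vy * ny) + (nx * vy - ny * vx) * nx) by ring.
    rewrite Ho; ring.
Qed.

Lemma orthogonal_cyclic_ratio (v1 v2 v3 n1 n2 n3 : pt) :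
  0 < dot n1 n1 -> 0 < dot n2 n2 -> 0 < dot n3 n3 ->
  dot v1 n1 = 0 -> dot v2 n2 = 0 -> dot v3 n3 = 0 ->
  0 < dot v1 v1 -> 0 < dot v2 v2 -> 0 < dot v3 v3 ->
  dot v1 v2 * dot v2 v3 * dot v3 v1 / (dot v1 v1 * dot v2 v2 * dot v3 v3)
  = dot n1 n2 * dot n2 n3 * dot n3 n1 / (dot n1 n1 * dot n2 n2 * dot n3 n3).
Proof.
  intros N1 N2 N3 O1 O2 O3 V1 V2 V3.
  destruct (orthogonal_is_rotation v1 n1 N1 O1) as [r1 ->].
  destruct (orthogonal_is_rotation v2 n2 N2 O2) as [r2 ->].
  destruct (orthogonal_is_rotation v3 n3 N3 O3) as [r3 ->].
  destruct n1 as [x1 y1], n2 as [x2 y2], n3 as [x3 y3].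
  unfold dot in *; cbn [fst snd] in *.
  assert (r1 <> 0) by (intro; subst; nra).
  assert (r2 <> 0) by (intro; subst; nra).
  assert (r3 <> 0) by (intro; subst; nra).
  field; repeat split; try lra; nra.
Qed.

Lemma cos_product_normals (Q1 Q2 Q3 n1 n2 n3 : pt) :
  Q1 <> Q2 -> Q2 <> Q3 -> Q3 <> Q1 ->
  0 < dot n1 n1 -> 0 < dot n2 n2 -> 0 < dot n3 n3 ->
  dot (vsub Q3 Q2) n1 = 0 -> dot (vsub Q1 Q3) n2 = 0 -> dot (vsub Q2 Q1) n3 = 0 ->
  cos (angle_at Q1 Q2 Q3) * cos (angle_at Q2 Q3 Q1) * cos (angle_at Q3 Q1 Q2)
  = - (dot n1 n2 * dot n2 n3 * dot n3 n1) / (dot n1 n1 * dot n2 n2 * dot n3 n3).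
Proof.
  intros H12 H23 H31 N1 N2 N3 O1 O2 O3.
  rewrite cos_product_triangle, !Rdiv_opp_l by assumption.
  f_equal; apply orthogonal_cyclic_ratio; try assumption; apply dot_vsub_pos; congruence.
Qed.

Definition ell (a b : R) (s : pt) : pt := (a * fst s, b * snd s).
Definition on_circle (s : pt) : Prop := dot s s = 1.

(* For circle points s, t: hc s t = cos(angle s t) - 1 and Dc; their product
   is minus the squared ellipse chord (chord_sq). *)
Definition hc (s t : pt) : R := dot s t - 1.
Definition Dc (a b : R) (s t : pt) : R :=
  (a ^ 2 + b ^ 2) - (a ^ 2 - b ^ 2) * (fst s * fst t - snd s * snd t).
(* Up to the factor 4/(a^2 b^2), the inner product of the ellipse normals. *)
Definition nE (a b : R) (s t : pt) : R :=
  b ^ 2 * (fst s * fst t) + a ^ 2 * (snd s * snd t).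

Lemma ellipse_param (a b : R) (P : pt) : 0 < a -> 0 < b -> on_ellipse a b P ->
  exists s, P = ell a b s /\ on_circle s.
Proof.
  destruct P as [x y]; unfold on_ellipse, fE, on_circle, ell, dot; cbn [fst snd].
  intros ha hb HP; exists (x / a, y / b); cbn [fst snd]; split.
  - f_equal; field; lra.
  - rewrite <- HP; field; lra.
Qed.

Lemma hc_sym (s t : pt) : hc s t = hc t s.
Proof. unfold hc, dot; ring. Qed.

Lemma Dc_sym (a b : R) (s t : pt) : Dc a b s t = Dc a b t s.
Proof. unfold Dc; ring. Qed.

Lemma hc_self (s : pt) : on_circle s -> hc s s = 0.
Proof. unfold on_circle, hc; intros ->; ring. Qed.

Lemma hc_neg (s t : pt) : on_circle s -> on_circle t -> s <> t -> hc s t < 0.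
Proof.
  unfold on_circle, hc; intros Cs Ct Hst.
  pose proof (dot_vsub_pos s t Hst) as Hpos.
  replace (dot (vsub s t) (vsub s t)) with (dot s s + dot t t - 2 * dot s t) in Hpos
    by (destruct s, t; unfold dot, vsub; cbn [fst snd]; ring).
  lra.
Qed.

Lemma Dc_pos (a b : R) (s t : pt) : 0 < b -> b < a ->
  on_circle s -> on_circle t -> 0 < Dc a b s t.
Proof.
  destruct s as [X Y], t as [X' Y']; unfold on_circle, Dc, dot; cbn [fst snd].
  intros hb hab Cs Ct.
  assert (Hcs : (X * X' - Y * Y') ^ 2 <= 1).
  { replace 1 with ((X * X + Y * Y) * (X' * X' + Y' * Y')) by (rewrite Cs, Ct; ring).
    assert (0 <= (X * Y' + Y * X') ^ 2) by apply pow2_ge_0.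
    nra. }
  assert (X * X' - Y * Y' <= 1) by nra.
  assert (0 < a ^ 2 - b ^ 2) by nra.
  assert (0 < b ^ 2) by nra.
  nra.
Qed.

Lemma nE_pos (a b : R) (s : pt) : 0 < b -> b < a -> on_circle s -> 0 < nE a b s s.
Proof.
  destruct s as [X Y]; unfold on_circle, nE, dot; cbn [fst snd]; intros hb hab Cs.
  assert (0 <= (a ^ 2 - b ^ 2) * (Y * Y)) by (apply Rmult_le_pos; nra).
  replace (b ^ 2 * (X * X) + a ^ 2 * (Y * Y)) with (b ^ 2 * (X * X + Y * Y) + (a ^ 2 - b ^ 2) * (Y * Y))
    by ring.
  rewrite Cs; nra.
Qed.

Lemma chord_sq (a b : R) (s t : pt) : on_circle s -> on_circle t ->
  dot (vsub (ell a b t) (ell a b s)) (vsub (ell a b t) (ell a b s)) = - hc s t * Dc a b s t.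
Proof.
  destruct s as [X Y], t as [X' Y']; unfold on_circle, hc, Dc, ell, vsub, dot; cbn [fst snd].
  intros Cs Ct.
  assert (Us : X * X + Y * Y - 1 = 0) by lra.
  assert (Ut : X' * X' + Y' * Y' - 1 = 0) by lra.
  (* the difference of the two sides lies in the ideal of the circle equations *)
  assert (E : - (X * X' + Y * Y' - 1) * (a ^ 2 + b ^ 2 - (a ^ 2 - b ^ 2) * (X * X' - Y * Y'))
      - ((a * X' - a * X) * (a * X' - a * X) + (b * Y' - b * Y) * (b * Y' - b * Y))
    = a ^ 2 * (- (X * X + Y * Y - 1) * (Y' * Y') - (X' * X' + Y' * Y' - 1) * (Y * Y)
               + (X * X + Y * Y - 1) * (X' * X' + Y' * Y' - 1))
      + b ^ 2 * (- (X * X + Y * Y - 1) * (X' * X') - (X' * X' + Y' * Y' - 1) * (X * X)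
               + (X * X + Y * Y - 1) * (X' * X' + Y' * Y' - 1)))
    by ring.
  rewrite Us, Ut in E; lra.
Qed.

Lemma normal_chord (a b : R) (s t : pt) : 0 < a -> 0 < b -> on_circle s ->
  dot (vsub (ell a b t) (ell a b s)) (gradf a b (ell a b s)) = 2 * hc s t.
Proof.
  intros ha hb Cs; unfold hc.
  transitivity (2 * (dot s t - dot s s)).
  - destruct s, t; unfold ell, vsub, gradf, dot; cbn [fst snd]; field; lra.
  - unfold on_circle in Cs; rewrite Cs; reflexivity.
Qed.

Lemma gradf_dot (a b : R) (s t : pt) : 0 < a -> 0 < b ->
  dot (gradf a b (ell a b s)) (gradf a b (ell a b t)) = 4 * nE a b s t / (a ^ 2 * b ^ 2).
Proof. intros ha hb; destruct s, t; unfold gradf, ell, nE, dot; cbn [fst snd]; field; lra. Qed.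

(* Squared form of the bisector condition: the normal n makes equal or
   supplementary angles with both sides d and e. *)
Lemma bisector_sq (d e n : pt) : 0 < dot d d -> 0 < dot e e ->
  cross (vadd (unitv d) (unitv e)) n = 0 ->
  dot d n ^ 2 * dot e e = dot e n ^ 2 * dot d d.
Proof.
  intros Hd He Hbis.
  assert (Ld : 0 < vnorm d) by (apply sqrt_lt_R0; exact Hd).
  assert (Le : 0 < vnorm e) by (apply sqrt_lt_R0; exact He).
  assert (Hc : vnorm e * cross d n = - (vnorm d * cross e n)).
  { enough (E : vnorm e * cross d n + vnorm d * cross e n
                = vnorm d * vnorm e * cross (vadd (unitv d) (unitv e)) n)
      by (rewrite Hbis, Rmult_0_r in E; lra).
    destruct d, e, n; unfold cross, vadd, unitv; cbn [fst snd]; field; lra. }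
  assert (Hsq : vnorm e * vnorm e * cross d n ^ 2 = vnorm d * vnorm d * cross e n ^ 2).
  { replace (vnorm e * vnorm e * cross d n ^ 2) with ((vnorm e * cross d n) ^ 2) by ring.
    rewrite Hc; ring. }
  rewrite !vnorm_sq, !cross_sq in Hsq.
  lra.
Qed.

Lemma bisector_ratio (a b : R) (s t t' : pt) : 0 < a -> 0 < b ->
  on_circle s -> on_circle t -> on_circle t' ->
  ell a b s <> ell a b t -> ell a b s <> ell a b t' ->
  normal_bisects a b (ell a b t) (ell a b s) (ell a b t') ->
  hc s t * Dc a b s t' = hc s t' * Dc a b s t.
Proof.
  intros ha hb Cs Ct Ct' Nt Nt' Hbis.
  assert (ht : hc s t < 0) by (apply hc_neg; auto; congruence).
  assert (ht' : hc s t' < 0) by (apply hc_neg; auto; congruence).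
  pose proof (bisector_sq _ _ _ (dot_vsub_pos _ _ (not_eq_sym Nt))
                (dot_vsub_pos _ _ (not_eq_sym Nt')) Hbis) as Hsq.
  rewrite !normal_chord, !chord_sq in Hsq by assumption.
  assert (Z : (4 * hc s t * hc s t') * (hc s t * Dc a b s t' - hc s t' * Dc a b s t) = 0).
  { replace (4 * hc s t * hc s t' * (hc s t * Dc a b s t' - hc s t' * Dc a b s t))
      with ((2 * hc s t') ^ 2 * (- hc s t * Dc a b s t) - (2 * hc s t) ^ 2 * (- hc s t' * Dc a b s t'))
      by ring.
    lra. }
  apply Rmult_integral in Z as [Z | Z]; [nra | lra].
Qed.

Lemma common_ratio (h1 D1 h2 D2 h3 D3 : R) : 0 < D1 -> h1 < 0 ->
  h2 * D1 = h1 * D2 -> h3 * D1 = h1 * D3 ->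
  exists u, 0 < u /\ u * D1 + h1 = 0 /\ u * D2 + h2 = 0 /\ u * D3 + h3 = 0.
Proof.
  intros HD Hh E2 E3; exists (- h1 / D1); repeat split.
  - unfold Rdiv; apply Rmult_lt_0_compat; [lra | apply Rinv_0_lt_compat; lra].
  - field; lra.
  - apply (Rmult_eq_reg_l D1); [| lra]; field_simplify; lra.
  - apply (Rmult_eq_reg_l D1); [| lra]; field_simplify; lra.
Qed.

Definition gu (u a b : R) (s t : pt) : R := u * Dc a b s t + hc s t.

(* The reflection law at two vertices of a 3-periodic gives a parameter u > 0
   (in fact u = J^2) for which gu u vanishes on every side. *)
Lemma caustic_parameter (a b : R) (s1 s2 s3 : pt) : 0 < b -> b < a ->
  on_circle s1 -> on_circle s2 -> on_circle s3 ->
  ell a b s1 <> ell a b s2 -> ell a b s2 <> ell a b s3 -> ell a b s3 <> ell a b s1 ->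
  normal_bisects a b (ell a b s3) (ell a b s1) (ell a b s2) ->
  normal_bisects a b (ell a b s1) (ell a b s2) (ell a b s3) ->
  exists u, 0 < u /\ gu u a b s1 s2 = 0 /\ gu u a b s2 s3 = 0 /\ gu u a b s3 s1 = 0.
Proof.
  intros hb hab C1 C2 C3 N12 N23 N31 B1 B2.
  assert (ha : 0 < a) by lra.
  pose proof (bisector_ratio a b s1 s3 s2 ha hb C1 C3 C2 (not_eq_sym N31) N12 B1) as R1.
  pose proof (bisector_ratio a b s2 s1 s3 ha hb C2 C1 C3 (not_eq_sym N12) N23 B2) as R2.
  rewrite (hc_sym s2 s1), (Dc_sym a b s2 s1) in R2.
  destruct (common_ratio (hc s1 s2) (Dc a b s1 s2) (hc s1 s3) (Dc a b s1 s3)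
              (hc s2 s3) (Dc a b s2 s3)) as (u & hu & E12 & E13 & E23).
  - apply Dc_pos; assumption.
  - apply hc_neg; [assumption | assumption | congruence].
  - exact R1.
  - symmetry; exact R2.
  - exists u; unfold gu; rewrite (hc_sym s3 s1), (Dc_sym a b s3 s1); auto.
Qed.

(* Twice the signed area of the triangle s1 s2 s3, i.e. det [s_i ; 1]. *)
Definition det3 (s1 s2 s3 : pt) : R := cross s1 s2 + cross s2 s3 + cross s3 s1.

(* Determinant of the Gram matrix (f (s_i, s_j)) of a symmetric form f. *)
Definition gram3 (f : pt -> pt -> R) (s1 s2 s3 : pt) : R :=
  f s1 s1 * (f s2 s2 * f s3 s3 - f s2 s3 ^ 2)
  - f s1 s2 * (f s1 s2 * f s3 s3 - f s3 s1 * f s2 s3)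
  + f s3 s1 * (f s1 s2 * f s2 s3 - f s2 s2 * f s3 s1).

(* Trace of adj (f-Gram matrix) times (g-Gram matrix): the mixed coefficient
   of the pencil det (f-Gram + x g-Gram). *)
Definition mixed3 (f g : pt -> pt -> R) (s1 s2 s3 : pt) : R :=
  (f s2 s2 * f s3 s3 - f s2 s3 ^ 2) * g s1 s1
  + (f s1 s1 * f s3 s3 - f s3 s1 ^ 2) * g s2 s2
  + (f s1 s1 * f s2 s2 - f s1 s2 ^ 2) * g s3 s3
  + 2 * (f s3 s1 * f s2 s3 - f s1 s2 * f s3 s3) * g s1 s2
  + 2 * (f s1 s2 * f s2 s3 - f s3 s1 * f s2 s2) * g s3 s1
  + 2 * (f s1 s2 * f s3 s1 - f s1 s1 * f s2 s3) * g s2 s3.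

Lemma gram3_hollow (f : pt -> pt -> R) (s1 s2 s3 : pt) :
  f s1 s1 = 0 -> f s2 s2 = 0 -> f s3 s3 = 0 ->
  gram3 f s1 s2 s3 = 2 * (f s1 s2 * f s2 s3 * f s3 s1).
Proof. unfold gram3; intros -> -> ->; ring. Qed.

Lemma gram3_diagonal (f : pt -> pt -> R) (s1 s2 s3 : pt) :
  f s1 s2 = 0 -> f s2 s3 = 0 -> f s3 s1 = 0 ->
  gram3 f s1 s2 s3 = f s1 s1 * f s2 s2 * f s3 s3.
Proof. unfold gram3; intros -> -> ->; ring. Qed.

Lemma mixed3_vanishes (f g : pt -> pt -> R) (s1 s2 s3 : pt) :
  f s1 s2 = 0 -> f s2 s3 = 0 -> f s3 s1 = 0 ->
  g s1 s1 = 0 -> g s2 s2 = 0 -> g s3 s3 = 0 -> mixed3 f g s1 s2 s3 = 0.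
Proof. unfold mixed3; intros -> -> -> -> -> ->; ring. Qed.

(* Cauchy-Binet for the forms hc = diag(1,1,-1) and gu = diag(1-uc, 1+uc, uA-1)
   evaluated on the vectors (X_i, Y_i, 1), with c = a^2-b^2, A = a^2+b^2. *)
Lemma gram3_hc (s1 s2 s3 : pt) : gram3 hc s1 s2 s3 = - det3 s1 s2 s3 ^ 2.
Proof. destruct s1, s2, s3; unfold gram3, hc, det3, dot, cross; cbn [fst snd]; ring. Qed.

Lemma gram3_gu (u a b : R) (s1 s2 s3 : pt) :
  gram3 (gu u a b) s1 s2 s3
  = det3 s1 s2 s3 ^ 2
    * ((1 - u * (a ^ 2 - b ^ 2)) * (1 + u * (a ^ 2 - b ^ 2)) * (u * (a ^ 2 + b ^ 2) - 1)).
Proof.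
  destruct s1, s2, s3; unfold gram3, gu, hc, Dc, det3, dot, cross; cbn [fst snd]; ring.
Qed.

Lemma mixed3_gu_hc (u a b : R) (s1 s2 s3 : pt) :
  mixed3 (gu u a b) hc s1 s2 s3
  = det3 s1 s2 s3 ^ 2 * ((a ^ 2 - b ^ 2) ^ 2 * u ^ 2 + 2 * (a ^ 2 + b ^ 2) * u - 3).
Proof.
  destruct s1, s2, s3; unfold mixed3, gu, hc, Dc, det3, dot, cross; cbn [fst snd]; ring.
Qed.

Lemma nE_decomposition (u a b : R) (s t : pt) :
  2 * u * nE a b s t = gu u a b s t + (u * (a ^ 2 + b ^ 2) - 1) * hc s t.
Proof. unfold nE, gu, Dc, hc, dot; ring. Qed.

Section CausticIdentities.
Variables (a b u : R) (s1 s2 s3 : pt).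
Hypotheses (C1 : on_circle s1) (C2 : on_circle s2) (C3 : on_circle s3).
Hypotheses (G12 : gu u a b s1 s2 = 0) (G23 : gu u a b s2 s3 = 0) (G31 : gu u a b s3 s1 = 0).
Hypotheses (H12 : hc s1 s2 <> 0) (H23 : hc s2 s3 <> 0) (H31 : hc s3 s1 <> 0).

(* The hc-Gram matrix is hollow with nonzero entries, hence nonsingular:
   the three points are not collinear. *)
Lemma det3_nonzero : det3 s1 s2 s3 <> 0.
Proof.
  intro E.
  pose proof (gram3_hc s1 s2 s3) as Gh.
  rewrite gram3_hollow, E in Gh by (apply hc_self; assumption).
  assert (Z : hc s1 s2 * hc s2 s3 * hc s3 s1 = 0) by lra.
  apply Rmult_integral in Z as [Z | Z]; [apply Rmult_integral in Z as [Z | Z] |]; contradiction.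
Qed.

Lemma caustic_equation :
  (a ^ 2 - b ^ 2) ^ 2 * u ^ 2 + 2 * (a ^ 2 + b ^ 2) * u - 3 = 0.
Proof.
  pose proof (mixed3_gu_hc u a b s1 s2 s3) as M.
  rewrite mixed3_vanishes in M by (assumption || (apply hc_self; assumption)).
  pose proof det3_nonzero as Hd.
  apply (Rmult_eq_reg_l (det3 s1 s2 s3 ^ 2)); [lra | apply pow_nonzero; exact Hd].
Qed.

Hypothesis (Hu : 0 < u).

(* Product identity for the normal form: compare the two Gram determinants. *)
Lemma normal_product :
  - (nE a b s1 s2 * nE a b s2 s3 * nE a b s3 s1)
  = (u * (a ^ 2 + b ^ 2) - 1) / 4 * (nE a b s1 s1 * nE a b s2 s2 * nE a b s3 s3).
Proof.
  pose proof caustic_equation as Q.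
  pose proof (gram3_hc s1 s2 s3) as Gh.
  rewrite gram3_hollow in Gh by (apply hc_self; assumption).
  pose proof (gram3_gu u a b s1 s2 s3) as Gg.
  rewrite gram3_diagonal in Gg by assumption.
  set (w := u * (a ^ 2 + b ^ 2) - 1) in *.
  assert (Hw : (1 - u * (a ^ 2 - b ^ 2)) * (1 + u * (a ^ 2 - b ^ 2)) = 2 * w) by (unfold w; lra).
  rewrite Hw in Gg.
  apply (Rmult_eq_reg_l (8 * u ^ 3)); [| apply Rgt_not_eq, Rmult_lt_0_compat; [lra | apply pow_lt; lra]].
  transitivity (- ((2 * u * nE a b s1 s2) * (2 * u * nE a b s2 s3) * (2 * u * nE a b s3 s1)));
    [ring |].
  transitivity (w / 4 * ((2 * u * nE a b s1 s1) * (2 * u * nE a b s2 s2) * (2 * u * nE a b s3 s3)));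
    [| ring].
  (* 2u nE = w hc on the sides, and 2u nE = gu on the diagonal *)
  rewrite !nE_decomposition; fold w.
  rewrite G12, G23, G31, !hc_self by assumption.
  transitivity (- w ^ 3 * (hc s1 s2 * hc s2 s3 * hc s3 s1)); [ring |].
  transitivity (w / 4 * (gu u a b s1 s1 * gu u a b s2 s2 * gu u a b s3 s3)); [| ring].
  rewrite Gg.
  replace (hc s1 s2 * hc s2 s3 * hc s3 s1) with (- det3 s1 s2 s3 ^ 2 / 2) by lra.
  field.
Qed.

End CausticIdentities.

Lemma caustic_root (a b u : R) : 0 < b -> b < a -> 0 < u ->
  (a ^ 2 - b ^ 2) ^ 2 * u ^ 2 + 2 * (a ^ 2 + b ^ 2) * u - 3 = 0 ->
  deltaE a b = ((a ^ 2 - b ^ 2) ^ 2 * u + (a ^ 2 + b ^ 2)) / 2.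
Proof.
  intros hb hab hu Q; unfold deltaE.
  apply sqrt_lem_1.
  - nra.
  - assert (0 <= (a ^ 2 - b ^ 2) ^ 2 * u) by (apply Rmult_le_pos; [apply pow2_ge_0 | lra]).
    nra.
  - transitivity (((a ^ 2 - b ^ 2) ^ 2 * ((a ^ 2 - b ^ 2) ^ 2 * u ^ 2 + 2 * (a ^ 2 + b ^ 2) * u - 3)
                   + 3 * (a ^ 2 - b ^ 2) ^ 2 + (a ^ 2 + b ^ 2) ^ 2) / 4); [field |].
    rewrite Q; field.
Qed.

Lemma Jconst_sq (a b u : R) : 0 < b -> b < a -> 0 < u ->
  (a ^ 2 - b ^ 2) ^ 2 * u ^ 2 + 2 * (a ^ 2 + b ^ 2) * u - 3 = 0 ->
  Jconst a b ^ 2 = u.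
Proof.
  intros hb hab hu Q; unfold Jconst, cE.
  assert (Hc : 0 < a ^ 2 - b ^ 2) by nra.
  rewrite (caustic_root a b u hb hab hu Q), pow2_sqrt by lra.
  replace (2 * (((a ^ 2 - b ^ 2) ^ 2 * u + (a ^ 2 + b ^ 2)) / 2) - a ^ 2 - b ^ 2)
    with ((a ^ 2 - b ^ 2) ^ 2 * u) by field.
  replace ((sqrt ((a ^ 2 - b ^ 2) ^ 2 * u) / (a ^ 2 - b ^ 2)) ^ 2)
    with (sqrt ((a ^ 2 - b ^ 2) ^ 2 * u) ^ 2 / (a ^ 2 - b ^ 2) ^ 2) by (field; lra).
  rewrite pow2_sqrt by (apply Rmult_le_pos; [apply pow2_ge_0 | lra]).
  field; lra.
Qed.

Lemma JL_caustic (a b u : R) : 0 < b -> b < a -> 0 < u ->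
  (a ^ 2 - b ^ 2) ^ 2 * u ^ 2 + 2 * (a ^ 2 + b ^ 2) * u - 3 = 0 ->
  Jconst a b * Lconst a b = u * (a ^ 2 + b ^ 2) + 3.
Proof.
  intros hb hab hu Q; unfold Lconst.
  transitivity (2 * (deltaE a b + a ^ 2 + b ^ 2) * Jconst a b ^ 2); [ring |].
  rewrite (Jconst_sq a b u), (caustic_root a b u) by assumption.
  lra.
Qed.

Lemma tangent_chord_perp (a b : R) (P Q Q' : pt) :
  on_tangent a b P Q -> on_tangent a b P Q' -> dot (vsub Q' Q) (gradf a b P) = 0.
Proof.
  destruct P, Q, Q'; unfold on_tangent, vsub, dot; cbn [fst snd]; intros; lra.
Qed.

Lemma tangent_polar (a b : R) (s Q : pt) : 0 < a -> 0 < b -> on_circle s ->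
  on_tangent a b (ell a b s) Q -> dot (fst Q / a, snd Q / b) s = 1.
Proof.
  unfold on_circle, on_tangent; intros ha hb Cs HQ.
  assert (E : dot (vsub Q (ell a b s)) (gradf a b (ell a b s))
              = 2 * (dot (fst Q / a, snd Q / b) s - dot s s))
    by (destruct s, Q; unfold vsub, gradf, ell, dot; cbn [fst snd]; field; lra).
  lra.
Qed.

Lemma tangents_concurrent (a b : R) (s1 s2 s3 Q : pt) : 0 < a -> 0 < b ->
  on_circle s1 -> on_circle s2 -> on_circle s3 ->
  on_tangent a b (ell a b s1) Q -> on_tangent a b (ell a b s2) Q ->
  on_tangent a b (ell a b s3) Q -> det3 s1 s2 s3 = 0.
Proof.
  intros ha hb C1 C2 C3 T1 T2 T3.
  set (p := (fst Q / a, snd Q / b)).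
  assert (E : det3 s1 s2 s3 = cross s2 s3 * (1 - dot p s1) + cross s3 s1 * (1 - dot p s2)
                              + cross s1 s2 * (1 - dot p s3))
    by (destruct s1, s2, s3, p; unfold det3, cross, dot; cbn [fst snd]; ring).
  unfold p in E; rewrite !tangent_polar in E by assumption.
  lra.
Qed.

Lemma outer_cos_product (a b : R) (s1 s2 s3 Q1 Q2 Q3 : pt) : 0 < b -> b < a ->
  on_circle s1 -> on_circle s2 -> on_circle s3 -> det3 s1 s2 s3 <> 0 ->
  on_tangent a b (ell a b s2) Q1 -> on_tangent a b (ell a b s3) Q1 ->
  on_tangent a b (ell a b s3) Q2 -> on_tangent a b (ell a b s1) Q2 ->
  on_tangent a b (ell a b s1) Q3 -> on_tangent a b (ell a b s2) Q3 ->
  cos (angle_at Q1 Q2 Q3) * cos (angle_at Q2 Q3 Q1) * cos (angle_at Q3 Q1 Q2)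
  = - (nE a b s1 s2 * nE a b s2 s3 * nE a b s3 s1)
    / (nE a b s1 s1 * nE a b s2 s2 * nE a b s3 s3).
Proof.
  intros hb hab C1 C2 C3 Hdet T21 T31 T32 T12 T13 T23.
  assert (ha : 0 < a) by lra.
  pose proof (nE_pos a b s1 hb hab C1) as P1.
  pose proof (nE_pos a b s2 hb hab C2) as P2.
  pose proof (nE_pos a b s3 hb hab C3) as P3.
  assert (Hn : forall s, on_circle s -> 0 < dot (gradf a b (ell a b s)) (gradf a b (ell a b s))).
  { intros s Cs; rewrite gradf_dot by assumption.
    pose proof (nE_pos a b s hb hab Cs).
    assert (0 < a ^ 2 * b ^ 2) by (apply Rmult_lt_0_compat; apply pow_lt; lra).
    apply Rdiv_lt_0_compat; lra. }
  (* two outer vertices coinciding would lie on all three tangents *)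
  assert (N12 : Q1 <> Q2).
  { intro E; rewrite <- E in *; apply Hdet.
    exact (tangents_concurrent a b s1 s2 s3 Q1 ha hb C1 C2 C3 T12 T21 T31). }
  assert (N23 : Q2 <> Q3).
  { intro E; rewrite <- E in *; apply Hdet.
    exact (tangents_concurrent a b s1 s2 s3 Q2 ha hb C1 C2 C3 T12 T23 T32). }
  assert (N31 : Q3 <> Q1).
  { intro E; rewrite <- E in *; apply Hdet.
    exact (tangents_concurrent a b s1 s2 s3 Q3 ha hb C1 C2 C3 T13 T23 T31). }
  rewrite (cos_product_normals Q1 Q2 Q3 _ _ _ N12 N23 N31 (Hn s1 C1) (Hn s2 C2) (Hn s3 C3)
             (tangent_chord_perp a b _ Q2 Q3 T12 T13) (tangent_chord_perp a b _ Q3 Q1 T23 T21)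
             (tangent_chord_perp a b _ Q1 Q2 T31 T32)).
  rewrite !gradf_dot by assumption.
  field; repeat split; lra.
Qed.

Theorem mainTheorem8 (a b : R) (P1 P2 P3 Q1 Q2 Q3 : pt) :
  0 < b -> b < a ->
  is_3periodic a b P1 P2 P3 ->
  on_tangent a b P2 Q1 -> on_tangent a b P3 Q1 ->
  on_tangent a b P3 Q2 -> on_tangent a b P1 Q2 ->
  on_tangent a b P1 Q3 -> on_tangent a b P2 Q3 ->
  cos (angle_at Q1 Q2 Q3) * cos (angle_at Q2 Q3 Q1) * cos (angle_at Q3 Q1 Q2)
  = Jconst a b * Lconst a b / 4 - 1.
Proof.
  intros hb hab Hper T21 T31 T32 T12 T13 T23.
  destruct Hper as (E1 & E2 & E3 & N12 & N23 & N31 & B1 & B2 & _).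
  assert (ha : 0 < a) by lra.
  destruct (ellipse_param a b P1 ha hb E1) as (s1 & -> & C1).
  destruct (ellipse_param a b P2 ha hb E2) as (s2 & -> & C2).
  destruct (ellipse_param a b P3 ha hb E3) as (s3 & -> & C3).
  destruct (caustic_parameter a b s1 s2 s3 hb hab C1 C2 C3 N12 N23 N31 B1 B2)
    as (u & hu & G12 & G23 & G31).
  assert (H12 : hc s1 s2 <> 0) by (apply Rlt_not_eq, hc_neg; auto; congruence).
  assert (H23 : hc s2 s3 <> 0) by (apply Rlt_not_eq, hc_neg; auto; congruence).
  assert (H31 : hc s3 s1 <> 0) by (apply Rlt_not_eq, hc_neg; auto; congruence).
  pose proof (det3_nonzero s1 s2 s3 C1 C2 C3 H12 H23 H31) as Hdet.
  pose proof (caustic_equation a b u s1 s2 s3 C1 C2 C3 G12 G23 G31 H12 H23 H31) as Hcaustic.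
  rewrite (outer_cos_product a b s1 s2 s3 Q1 Q2 Q3 hb hab C1 C2 C3 Hdet T21 T31 T32 T12 T13 T23).
  rewrite (normal_product a b u s1 s2 s3 C1 C2 C3 G12 G23 G31 H12 H23 H31 hu).
  rewrite (JL_caustic a b u hb hab hu Hcaustic).
  pose proof (nE_pos a b s1 hb hab C1). pose proof (nE_pos a b s2 hb hab C2).
  pose proof (nE_pos a b s3 hb hab C3).
  field; repeat split; lra.
Qed.
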